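(* Let $X\subseteq\mathcal{A}^{\mathbb{Z}}$ be an aperiodic subshift having at most $L$ right asymptotic tails and at most $L$ left asymptotic tails. Then $X$ has at most $2L^2\cdot(\#\mathcal{A})^2$ centered asymptotic pairs.
   Context: A pair $(x,\tilde x)$ of points of $X$ is right asymptotic if there is $k\in\mathbb{Z}$ with $x_{(k,\infty)}=\tilde x_{(k,\infty)}$ and $x_k\ne\tilde x_k$; it is centered right asymptotic if moreover $k=0$. A right asymptotic tail of $X$ is a one-sided sequence $x_{(0,\infty)}$ where $(x,\tilde x)$ is a centered right asymptotic pair in $X$. Left asymptotic pairs, centered left asymptotic pairs and left asymptotic tails are defined symmetrically (with $x_{(-\infty,k)}=\tilde x_{(-\infty,k)}$, $x_k\neq\tilde x_k$, and tails $x_{(-\infty,0)}$). A centered asymptotic pair is a centered right asymptotic pair or a centered left asymptotic pair. $X$ is aperiodic if it has no periodic points. *)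

From mathcomp Require Import all_boot.
From Stdlib Require Import ZArith List.
Set Implicit Arguments.
Unset Strict Implicit.
Unset Printing Implicit Defensive.

Open Scope Z_scope.

Definition config (A : finType) := Z -> A.

Definition shift (A : finType) (x : config A) : config A := fun i => x (i + 1).

(* X is closed in the product topology: a point all of whose central
   windows [-n,n] agree with some point of X belongs to X. *)
Definition closed_set (A : finType) (X : config A -> Prop) : Prop :=
  forall x : config A,
    (forall n : nat, exists y, X y /\ forall i, - Z.of_nat n <= i <= Z.of_nat n -> y i = x i) ->
    X x.

Definition subshift (A : finType) (X : config A -> Prop) : Prop :=
  closed_set X /\ (forall x, X x <-> X (shift x)).

Definition aperiodic (A : finType) (X : config A -> Prop) : Prop :=
  forall x, X x -> forall p : Z, 0 < p -> ~ (forall i, x (i + p) = x i).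

Definition centered_right_asymptotic (A : finType) (X : config A -> Prop)
  (x y : config A) : Prop :=
  X x /\ X y /\ (forall i, 0 < i -> x i = y i) /\ x 0 <> y 0.

Definition centered_left_asymptotic (A : finType) (X : config A -> Prop)
  (x y : config A) : Prop :=
  X x /\ X y /\ (forall i, i < 0 -> x i = y i) /\ x 0 <> y 0.

Definition centered_asymptotic (A : finType) (X : config A -> Prop)
  (x y : config A) : Prop :=
  centered_right_asymptotic X x y \/ centered_left_asymptotic X x y.

(* One-sided sequences x_(0,oo) and x_(-oo,0), indexed by nat:
   right_tail x n = x_(n+1),  left_tail x n = x_(-(n+1)). *)
Definition right_tail (A : finType) (x : config A) : nat -> A :=
  fun n => x (Z.of_nat n + 1).
Definition left_tail (A : finType) (x : config A) : nat -> A :=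
  fun n => x (- (Z.of_nat n + 1)).

Definition is_right_asymptotic_tail (A : finType) (X : config A -> Prop)
  (t : nat -> A) : Prop :=
  exists x y, centered_right_asymptotic X x y /\ t = right_tail x.

Definition is_left_asymptotic_tail (A : finType) (X : config A -> Prop)
  (t : nat -> A) : Prop :=
  exists x y, centered_left_asymptotic X x y /\ t = left_tail x.

Definition at_most (T : Type) (n : nat) (P : T -> Prop) : Prop :=
  exists l : list T, (length l <= n)%nat /\ forall t, P t -> In t l.

(** A right asymptotic pair (x, y) makes the origin a branch point of x: a
    position where some point of X agrees with x strictly to the right and
    differs at that position.  Distinct branch points of x carry distinct right
    asymptotic tails, since equal tails would make x eventually periodic, and
    an eventually periodic point of a subshift forces a periodic point by
    closedness.  So x has a leftmost branch point, and the tail there together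
    with the symbol at it determines x up to translation: a first disagreement
    further left would be a branch point further left.  A pair of translates of
    x and y is again centered right asymptotic only for the trivial
    translation, so a centered right asymptotic pair is determined by two such
    codes, leaving at most (L #A)^2 pairs.  Centered left asymptotic pairs are
    centered right asymptotic pairs of the mirror image of X. *)

From Pilot Require Import Defs.
From mathcomp Require Import all_boot.
From Stdlib Require Import ZArith List.
From mathcomp Require Import zify.
From Stdlib Require Import Lia Classical FunctionalExtensionality.

Set Implicit Arguments.
Unset Strict Implicit.
Unset Printing Implicit Defensive.

Lemma length_size (T : Type) (s : list T) : length s = size s.
Proof. by elim: s => //= x s ->. Qed.

Lemma mem_In (T : eqType) (s : list T) (x : T) : x \in s -> In x s.
Proof. by elim: s => //= y s IH; rewrite seq.in_cons => /orP [/eqP ->|/IH]; auto. Qed.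

Section AtMost.

Variable T : Type.

Lemma at_most_or (m n : nat) (P Q : T -> Prop) :
  at_most m P -> at_most n Q -> at_most (m + n) (fun t => P t \/ Q t).
Proof.
move=> [l [le_l inl]] [k [le_k ink]]; exists (l ++ k); split.
  by rewrite length_app leq_add.
by move=> t [/inl|/ink] ?; apply: in_or_app; [left | right].
Qed.

Lemma at_most_image (U : Type) (n : nat) (P : U -> Prop) (Q : T -> Prop) (f : U -> T) :
  at_most n P -> (forall t, Q t -> exists2 s, P s & t = f s) -> at_most n Q.
Proof.
move=> [l [le_l inl]] QfP; exists (map f l); split; first by rewrite length_map.
by move=> t /QfP [s /inl s_l ->]; apply: in_map.
Qed.

Lemma at_most_code (U : Type) (n : nat) (P : T -> Prop) (R : T -> U -> Prop)
    (codes : list U) :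
  (length codes <= n)%nat ->
  (forall t, P t -> exists2 c, R t c & In c codes) ->
  (forall t1 t2 c, P t1 -> P t2 -> R t1 c -> R t2 c -> t1 = t2) ->
  at_most n P.
Proof.
move=> le_codes coded R_inj.
suff [l [le_l inl]] : at_most (length codes) P.
  by exists l; split=> //; apply: leq_trans le_codes.
elim: codes P coded R_inj {le_codes} => [|c codes IH] P coded R_inj.
  by exists nil; split=> // t /coded [].
have [l [le_l inl]] : at_most (length codes) (fun t => P t /\ ~ R t c).
  apply: IH => [t [Pt nRtc]|t1 t2 c' [Pt1 _] [Pt2 _]]; last exact: R_inj.
  by have [c' Rtc' [Ec|]] := coded t Pt; [subst c'; contradiction | exists c'].
have [[t0 [Pt0 Rt0c]] | no_t0] := classic (exists t, P t /\ R t c).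
- exists (t0 :: l); split=> [|t Pt]; first by rewrite /= ltnS.
  have [Rtc|nRtc] := classic (R t c); first by left; apply: R_inj Rt0c Rtc.
  by right; apply: inl.
- exists l; split=> [|t Pt]; first by rewrite /= leqW.
  by apply: inl; split=> // Rtc; apply: no_t0; exists t.
Qed.

End AtMost.

Lemma nat_bounded_has_max (P : nat -> Prop) (b k : nat) :
  P k -> (forall j, P j -> j <= b)%nat -> exists K, P K /\ forall j, P j -> (j <= K)%nat.
Proof.
move=> Pk bounded.
suff [K [PK maxK]] : exists K, P K /\ forall j, P j -> (j <= b)%nat -> (j <= K)%nat.
  by exists K; split=> // j Pj; apply: maxK Pj (bounded j Pj).
have : exists j, P j /\ (j <= b)%nat by exists k; split=> //; apply: bounded.
elim: b {bounded} => [|b IH] [j [Pj le_jb]].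
  by exists j; split=> // i _; rewrite leqn0 => /eqP ->.
have [Pb | nPb] := classic (P b.+1); first by exists b.+1.
have le_b i : P i -> (i <= b.+1)%nat -> (i <= b)%nat.
  by move=> Pi; rewrite leq_eqVlt => /orP [/eqP Ei|//]; subst i.
have [K [PK maxK]] := IH (ex_intro _ j (conj Pj (le_b j Pj le_jb))).
by exists K; split=> // i Pi /(le_b i Pi); apply: maxK.
Qed.

Lemma at_most_has_max (n k : nat) (P : nat -> Prop) :
  at_most n P -> P k -> exists K, P K /\ forall j, P j -> (j <= K)%nat.
Proof.
move=> [l [_ inl]] Pk; apply: (nat_bounded_has_max (b := foldr maxn 0%nat l) Pk).
move=> j /inl; elim: l {inl} => //= i l IH [->|/IH le_jl]; rewrite leq_max ?leqnn //.
by rewrite le_jl orbT.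
Qed.

Section Translation.

Variable A : finType.

Definition translate (x : config A) (m : Z) : config A := fun i => x (i + m).

Lemma translate0 (x : config A) : translate x 0 = x.
Proof. by apply: functional_extensionality => i; rewrite /translate Z.add_0_r. Qed.

Lemma translateD (x : config A) (a b : Z) :
  translate (translate x a) b = translate x (a + b).
Proof. by apply: functional_extensionality => i; rewrite /translate; f_equal; lia. Qed.

Variable X : config A -> Prop.
Hypothesis X_subshift : subshift X.

Lemma translate_subshift (x : config A) (m : Z) : X (translate x m) <-> X x.
Proof.
have [_ X_shift] := X_subshift.
have shift_translate y k : Defs.shift (translate y k) = translate y (Z.succ k).
  by rewrite -Z.add_1_r -translateD.
elim/Z.peano_ind: m x => [|m IH|m IH] x; first by rewrite translate0.
- by rewrite -shift_translate -X_shift.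
- by rewrite X_shift shift_translate Z.succ_pred.
Qed.

Hypothesis X_aperiodic : aperiodic X.

Lemma subshift_not_eventually_periodic (x : config A) (p N : Z) :
  X x -> 0 < p -> ~ (forall i, N <= i -> x (i + p) = x i).
Proof.
move=> Xx p_gt0 x_per.
(* z continues x|[N, oo) periodically to the left; it is a limit of translates of x. *)
pose z : config A := fun i => x (N + (i - N) mod p).
have z_per k i : z (i + k * p) = z i.
  rewrite /z -(Z.mod_add (i - N) k); last lia.
  by do 3 f_equal; lia.
have x_per_mul (q : nat) i : N <= i -> x (i + Z.of_nat q * p) = x i.
  elim: q i => [|q IH] i le_Ni; first by rewrite Z.add_0_r.
  by rewrite Nat2Z.inj_succ Z.mul_succ_l Z.add_assoc x_per ?IH //; nia.
have x_z i : N <= i -> x i = z i.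
  move=> le_Ni; have [r_ge0 r_lt] := Z.mod_pos_bound (i - N) p p_gt0.
  have q_ge0 : 0 <= (i - N) / p by apply: Z.div_pos; lia.
  rewrite /z -(x_per_mul (Z.to_nat ((i - N) / p)) (N + (i - N) mod p)); last lia.
  have := Z_div_mod_eq_full (i - N) p; rewrite Z2Nat.id //.
  by move: ((i - N) / p) ((i - N) mod p) => q r i_qr; f_equal; lia.
have Xz : X z.
  have [X_closed _] := X_subshift.
  apply: X_closed => n; exists (translate x (p * (Z.abs N + Z.of_nat n))).
  split=> [|i le_i]; first by apply/translate_subshift.
  by rewrite /translate x_z; [rewrite [p * _]Z.mul_comm z_per | nia].
have z_periodic i : z (i + p) = z i by rewrite -(z_per 1 i) Z.mul_1_l.
exact: X_aperiodic Xz p p_gt0 z_periodic.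
Qed.

Lemma eventually_eq_translate (x : config A) (a b N : Z) :
  X x -> (forall i, N <= i -> x (i + a) = x (i + b)) -> a = b.
Proof.
move=> Xx; wlog lt_ab : a b / a < b => [wlog_lt | x_eq].
  case: (Z.lt_total a b) => [/wlog_lt // | [// | /wlog_lt eq_ba x_eq]].
  by apply/esym/eq_ba => i /x_eq.
exfalso; apply: (subshift_not_eventually_periodic (p := b - a) (N := N + a) Xx); first lia.
move=> i le_i; have -> : i + (b - a) = i - a + b by lia.
by rewrite -x_eq ?Z.sub_add //; lia.
Qed.

End Translation.

Section Mirror.

Variable A : finType.

Definition mirror (x : config A) : config A := fun i => x (- i).

Definition mirror_set (X : config A -> Prop) : config A -> Prop := fun x => X (mirror x).

Lemma mirrorK : involutive mirror.
Proof. by move=> x; apply: functional_extensionality => i; rewrite /mirror Z.opp_involutive. Qed.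

Variable X : config A -> Prop.

Lemma mirror_subshift : subshift X -> subshift (mirror_set X).
Proof.
move=> X_subshift; have [X_closed _] := X_subshift; split.
  move=> x x_approx; apply: X_closed => n.
  have [y [Xy y_x]] := x_approx n; exists (mirror y); split=> // i le_i.
  by rewrite /mirror y_x //; lia.
move=> x; rewrite /mirror_set; have -> : mirror (Defs.shift x) = translate (mirror x) (-1).
  by apply: functional_extensionality => i; rewrite /translate /mirror /Defs.shift; f_equal; lia.
by rewrite translate_subshift.
Qed.

Lemma mirror_aperiodic : aperiodic X -> aperiodic (mirror_set X).
Proof.
move=> X_aperiodic x Xx p p_gt0 x_per; apply: (X_aperiodic _ Xx p p_gt0) => i.
by rewrite /mirror -(x_per (- (i + p))); f_equal; lia.
Qed.

Lemma mirror_centered_right_asymptotic (x y : config A) :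
  centered_right_asymptotic (mirror_set X) x y <->
  centered_left_asymptotic X (mirror x) (mirror y).
Proof.
split=> [] [Xx [Xy [agree differ]]]; do 2 split=> //; split=> // i i_pos.
- by apply: agree; lia.
- by rewrite -[i]Z.opp_involutive; apply: agree; lia.
Qed.

Lemma mirror_right_asymptotic_tail (t : nat -> A) :
  is_right_asymptotic_tail (mirror_set X) t -> is_left_asymptotic_tail X t.
Proof.
move=> [x [y [/mirror_centered_right_asymptotic xy ->]]]; exists (mirror x), (mirror y).
split=> //; apply: functional_extensionality => n.
by rewrite /left_tail /right_tail /mirror Z.opp_involutive.
Qed.

End Mirror.

Section BranchPoints.

Variables (A : finType) (X : config A -> Prop).
Hypotheses (X_subshift : subshift X) (X_aperiodic : aperiodic X).

Definition branch_point (x : config A) (k : nat) : Prop :=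
  exists2 z, X z & (forall i, - Z.of_nat k < i -> z i = x i) /\
                   z (- Z.of_nat k) <> x (- Z.of_nat k).

Definition max_branch_point (x : config A) (K : nat) : Prop :=
  branch_point x K /\ forall k, branch_point x k -> (k <= K)%nat.

Definition tail_at (x : config A) (k : nat) : nat -> A :=
  right_tail (translate x (- Z.of_nat k)).

Lemma centered_right_asymptotic_sym (x y : config A) :
  centered_right_asymptotic X x y -> centered_right_asymptotic X y x.
Proof.
by move=> [Xx [Xy [agree differ]]]; do 2 split=> //; split=> [i /agree|/esym].
Qed.

Lemma centered_right_asymptotic_branch_point (x y : config A) :
  centered_right_asymptotic X x y -> branch_point x 0.
Proof.
move=> [Xx [Xy [agree differ]]]; exists y => //.
by split=> [i i_gt0|/esym //]; rewrite agree.
Qed.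

Lemma branch_point_tail (x : config A) (k : nat) :
  X x -> branch_point x k -> is_right_asymptotic_tail X (tail_at x k).
Proof.
move=> Xx [z Xz [agree differ]].
exists (translate x (- Z.of_nat k)), (translate z (- Z.of_nat k)); split=> //.
do 2 (split; first exact/translate_subshift).
split=> [i i_gt0|]; first by rewrite /translate agree //; lia.
by rewrite /translate Z.add_0_l => /esym.
Qed.

Lemma tail_at_inj (x : config A) : X x -> injective (tail_at x).
Proof.
move=> Xx a b eq_ab; apply/Nat2Z.inj/Z.opp_inj.
apply: (eventually_eq_translate X_subshift X_aperiodic (N := 1) Xx) => i le_i.
have := equal_f eq_ab (Z.to_nat (i - 1)).
by rewrite /tail_at /right_tail /translate Z2Nat.id ?Z.sub_add; last lia.
Qed.

Lemma branch_points_at_most (tails : list (nat -> A)) (x : config A) :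
  (forall t, is_right_asymptotic_tail X t -> In t tails) -> X x ->
  at_most (length tails) (branch_point x).
Proof.
move=> in_tails Xx.
apply: (at_most_code (R := fun k t => t = tail_at x k) (codes := tails)) => //.
  by move=> k x_k; exists (tail_at x k) => //; apply/in_tails/branch_point_tail.
by move=> k1 k2 t _ _ -> /(tail_at_inj Xx).
Qed.

Lemma branch_point_translate (x : config A) (K d : nat) :
  branch_point (translate x (- Z.of_nat K)) d -> branch_point x (K + d).
Proof.
move=> [z Xz [agree differ]]; exists (translate z (Z.of_nat K)).
  exact/translate_subshift.
split=> [i lt_i|]; rewrite /translate.
  by rewrite agree /translate; [f_equal | ]; lia.
have -> : - Z.of_nat (K + d) + Z.of_nat K = - Z.of_nat d by lia.
by have -> : - Z.of_nat (K + d) = - Z.of_nat d + - Z.of_nat K by lia.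
Qed.

Lemma eq_on_nonneg_no_branch_point (u v : config A) :
  X v -> (forall d, (0 < d)%nat -> ~ branch_point u d) ->
  (forall i, 0 <= i -> v i = u i) -> v = u.
Proof.
move=> Xv no_branch agree; apply: functional_extensionality => i; apply: NNPP => ne_i.
have i_neg : i < 0 by case: (Z.le_gt_cases 0 i) => // /agree /ne_i [].
pose P d := v (- Z.of_nat d) != u (- Z.of_nat d).
have P_i : P (Z.to_nat (- i)) by rewrite /P Z2Nat.id ?Z.opp_involutive; [apply/eqP | lia].
have [d /eqP differ min_d] := ex_minnP (ex_intro P _ P_i).
apply: (no_branch d); first by rewrite lt0n; apply/eqP => d0; apply: differ; rewrite d0 agree.
exists v => //; split=> // j lt_j; case: (Z.le_gt_cases 0 j) => [/agree //|j_neg].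
apply/eqP; apply: contraT => P_j; have := min_d (Z.to_nat (- j)).
by rewrite /P Z2Nat.id ?Z.opp_involutive; [move=> /(_ P_j); lia | lia].
Qed.

Lemma max_branch_point_rigid (x x' : config A) (K K' : nat) :
  X x' -> max_branch_point x K ->
  tail_at x' K' = tail_at x K -> x' (- Z.of_nat K') = x (- Z.of_nat K) ->
  translate x' (- Z.of_nat K') = translate x (- Z.of_nat K).
Proof.
move=> Xx' [_ max_K] eq_tail eq_origin.
apply: eq_on_nonneg_no_branch_point; first exact/translate_subshift.
  by move=> d d_gt0 /branch_point_translate /max_K; rewrite -{2}[K]addn0 leq_add2l leqNgt d_gt0.
move=> i; rewrite Z.le_lteq => -[i_gt0 | <-] //.
have := equal_f eq_tail (Z.to_nat (i - 1)).
by rewrite /tail_at /right_tail Z2Nat.id ?Z.sub_add; last lia.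
Qed.

Definition coded_by (x : config A) (c : (nat -> A) * A) : Prop :=
  exists2 K, max_branch_point x K & c = (tail_at x K, x (- Z.of_nat K)).

Lemma coded_by_exists (tails : list (nat -> A)) (x : config A) :
  (forall t, is_right_asymptotic_tail X t -> In t tails) -> X x -> branch_point x 0 ->
  exists2 c, coded_by x c & In c (list_prod tails (enum A)).
Proof.
move=> in_tails Xx x_0.
have [K [x_K max_K]] := at_most_has_max (branch_points_at_most in_tails Xx) x_0.
exists (tail_at x K, x (- Z.of_nat K)); first by exists K.
by apply: in_prod; [apply/in_tails/branch_point_tail | apply/mem_In/mem_enum].
Qed.

Lemma coded_by_translate (x x' : config A) (c : (nat -> A) * A) :
  X x' -> coded_by x c -> coded_by x' c -> exists a, x' = translate x a.
Proof.
move=> Xx' [K max_K ->] [K' _ [eq_tail eq_origin]].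
exists (- Z.of_nat K + Z.of_nat K').
rewrite -translateD -(max_branch_point_rigid Xx' max_K (esym eq_tail) (esym eq_origin)).
by rewrite translateD Z.add_opp_diag_l translate0.
Qed.

Lemma centered_right_asymptotic_translate (x y : config A) (a b : Z) :
  centered_right_asymptotic X x y ->
  centered_right_asymptotic X (translate x a) (translate y b) -> a = 0 /\ b = 0.
Proof.
move=> [Xx [_ [agree differ]]] [_ [_ [agree' differ']]].
have eq_ab : a = b.
  apply: (eventually_eq_translate X_subshift X_aperiodic (N := 1 + Z.abs b) Xx) => i le_i.
  by rewrite [x (i + b)]agree; [apply: agree' | ]; lia.
subst b; suff -> : a = 0 by [].
case: (Z.lt_total a 0) => [a_neg | [// | a_pos]]; exfalso.
- by apply: differ; have := agree' (- a) ltac:(lia); rewrite /translate Z.add_opp_diag_l.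
- by apply: differ'; rewrite /translate Z.add_0_l agree.
Qed.

Lemma right_asymptotic_pairs_at_most (L : nat) :
  at_most L (is_right_asymptotic_tail X) ->
  at_most (L ^ 2 * #|A| ^ 2)%nat
    (fun p : config A * config A => centered_right_asymptotic X p.1 p.2).
Proof.
move=> [tails [le_tails in_tails]].
pose codes := list_prod tails (enum A).
apply: (at_most_code (R := fun p c => coded_by p.1 c.1 /\ coded_by p.2 c.2)
                     (codes := list_prod codes codes)).
- rewrite !length_prod (length_size (enum A)) -cardE !Nat.pow_2_r !multE mulnACA.
  by apply: leq_mul; [apply: leq_mul | ].
- move=> [x y] /= xy; have [Xx [Xy _]] := xy.
  have [cx x_cx in_cx] := coded_by_exists in_tails Xx (centered_right_asymptotic_branch_point xy).
  have [cy y_cy in_cy] := coded_by_exists in_tails Xy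
    (centered_right_asymptotic_branch_point (centered_right_asymptotic_sym xy)).
  by exists (cx, cy); last exact: in_prod.
- move=> [x y] [x' y'] [cx cy] /= xy x'y' [x_cx y_cy] [x'_cx y'_cy].
  have [Xx' [Xy' _]] := x'y'.
  have [a x'_def] := coded_by_translate Xx' x_cx x'_cx.
  have [b y'_def] := coded_by_translate Xy' y_cy y'_cy.
  rewrite x'_def y'_def in x'y' *.
  by have [-> ->] := centered_right_asymptotic_translate xy x'y'; rewrite !translate0.
Qed.

End BranchPoints.

Theorem lemma6p6 (A : finType) (X : config A -> Prop) (L : nat) :
  subshift X -> aperiodic X ->
  at_most L (is_right_asymptotic_tail X) ->
  at_most L (is_left_asymptotic_tail X) ->
  at_most (2 * L ^ 2 * #|A| ^ 2)%nat
    (fun p : config A * config A => centered_asymptotic X p.1 p.2).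
Proof.
move=> X_subshift X_aperiodic right_tails left_tails.
have mirror_tails : at_most L (is_right_asymptotic_tail (mirror_set X)).
  by apply: (at_most_image (f := id) left_tails) => t /mirror_right_asymptotic_tail; exists t.
have left_pairs : at_most (L ^ 2 * #|A| ^ 2)%nat
    (fun p : config A * config A => centered_left_asymptotic X p.1 p.2).
  apply: (at_most_image (f := fun p => (mirror p.1, mirror p.2)))
    (right_asymptotic_pairs_at_most (mirror_subshift X_subshift)
       (mirror_aperiodic X_aperiodic) mirror_tails) _ => -[x y] /= xy.
  exists (mirror x, mirror y); last by rewrite /= !mirrorK.
  by apply/mirror_centered_right_asymptotic; rewrite !mirrorK.
rewrite -mulnA mul2n -addnn.
exact: at_most_or (right_asymptotic_pairs_at_most X_subshift X_aperiodic right_tails) left_pairs.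
Qed.
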